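(* Let $(X,\tau)$ be an extended locally convex space and let $\tau_F$ be its finest locally convex topology. A (finite-valued) seminorm on $X$ is continuous with respect to $\tau$ if and only if it is continuous with respect to $\tau_F$.
   Context: An extended seminorm on a vector space $X$ over $\mathbb{R}$ or $\mathbb{C}$ is a map $\rho:X\to[0,\infty]$ with $\rho(\alpha x)=|\alpha|\rho(x)$ and $\rho(x+y)\le\rho(x)+\rho(y)$. An extended locally convex space $(X,\tau)$ is a vector space with the topology induced by a family $\{\rho_i\}$ of extended seminorms (neighborhood base at $x_0$: $\{x:\max_{i\in J}\rho_i(x-x_0)<\varepsilon\}$, $J$ finite, $\varepsilon>0$). A locally convex topology is one induced in this way by finite-valued seminorms. The finest locally convex topology $\tau_F$ of $(X,\tau)$ is the locally convex topology on $X$ with $\tau_F\subseteq\tau$ such that every locally convex topology $\sigma\subseteq\tau$ on $X$ satisfies $\sigma\subseteq\tau_F$. *)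

From mathcomp Require Import all_boot all_order all_algebra.
From mathcomp Require Import all_classical all_reals all_analysis.
From mathcomp Require Export complex.
Set Implicit Arguments. Unset Strict Implicit. Unset Printing Implicit Defensive.
Import Order.TTheory GRing.Theory Num.Theory numFieldNormedType.Exports.
Local Open Scope classical_set_scope.
Local Open Scope ring_scope.

(* Throughout: R is the real field, K the scalar field (R or C = R[i]),
   absK : K -> R the modulus |.| on K, X a K-vector space.
   A topology on X is represented by its family of open sets. *)

Section Defs.
Variables (R : realType) (K : nzRingType) (absK : K -> R) (X : lmodType K).

Definition ext_seminorm (rho : X -> \bar R) : Prop :=
  [/\ forall x, (0 <= rho x)%E,
      forall (a : K) (x : X), rho (a *: x) = ((absK a)%:E * rho x)%E
    & forall x y : X, (rho (x + y)%R <= rho x + rho y)%E].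

Definition seminorm (p : X -> R) : Prop :=
  [/\ forall x, 0 <= p x,
      forall (a : K) x, p (a *: x) = absK a * p x
    & forall x y, p (x + y) <= p x + p y].

Definition induced_topology (I : Type) (rho : I -> X -> \bar R)
  : set (set X) :=
  [set U | forall x0, U x0 ->
     exists (J : set I) (eps : R), [/\ finite_set J, 0 < eps &
       [set x | forall i, J i ->
                  (rho i (x - x0)%R < eps%:E)%E] `<=` U]].

Definition ext_locally_convex (tau : set (set X)) : Prop :=
  exists (I : Type) (rho : I -> X -> \bar R),
    (forall i, ext_seminorm (rho i)) /\ tau = induced_topology rho.

Definition locally_convex (sigma : set (set X)) : Prop :=
  exists (I : Type) (p : I -> X -> R),
    (forall i, seminorm (p i)) /\
    sigma = induced_topology (fun i x => (p i x)%:E).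

Definition finest_lc_topology (tau tauF : set (set X)) : Prop :=
  [/\ locally_convex tauF, tauF `<=` tau &
      forall sigma, locally_convex sigma -> sigma `<=` tau -> sigma `<=` tauF].

Definition continuous_wrt (tau : set (set X)) (p : X -> R) : Prop :=
  forall A : set R, open A -> tau (p @^-1` A).

End Defs.

Definition theorem3p5_for (R : realType) (K : nzRingType) (absK : K -> R)
  : Prop :=
  forall (X : lmodType K) (tau tauF : set (set X)),
    ext_locally_convex absK tau ->
    finest_lc_topology absK tau tauF ->
    forall p : X -> R, seminorm absK p ->
      (continuous_wrt tau p <-> continuous_wrt tauF p).

From Pilot Require Import Defs.
From mathcomp Require Import all_boot all_order all_algebra.
From mathcomp Require Import all_classical all_reals all_analysis.
From mathcomp Require Import lra.
From mathcomp Require Import complex.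
Import Order.TTheory GRing.Theory Num.Theory numFieldNormedType.Exports.
Local Open Scope classical_set_scope.
Local Open Scope ring_scope.

(* A seminorm p continuous for tau induces by itself a locally convex
   topology sigma_p coarser than tau: the p-balls around 0 are tau-open and
   the topology of an extended seminorm family is translation invariant.
   Maximality of tauF then gives sigma_p <= tauF, and p is sigma_p-continuous
   since it is 1-Lipschitz for itself.  The converse holds because
   tauF <= tau. *)

Section SeminormTopology.
Context {R : realType} {K : nzRingType} {absK : K -> R} {X : lmodType K}.

Definition seminorm_topology (p : X -> R) : set (set X) :=
  induced_topology (fun (_ : unit) x => (p x)%:E).

Lemma continuous_wrt_sub {sigma tau : set (set X)} {p : X -> R} :
  sigma `<=` tau -> continuous_wrt sigma p -> continuous_wrt tau p.
Proof. by move=> sub cp A oA; apply/sub/cp. Qed.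

Context {p : X -> R} (sp : seminorm absK p).

Lemma seminorm_topology_lc : Defs.locally_convex absK (seminorm_topology p).
Proof. by exists unit, (fun _ => p). Qed.

Lemma seminorm0 : absK 0 = 0 -> p 0 = 0.
Proof. by case: sp => _ pZ _ absK0; rewrite -(scale0r (0 : X)) pZ absK0 mul0r. Qed.

Lemma seminormN x : absK (-1) = 1 -> p (- x) = p x.
Proof. by case: sp => _ pZ _ absKN1; rewrite -scaleN1r pZ absKN1 mul1r. Qed.

Lemma seminorm_lipschitz x y : absK (-1) = 1 -> `|p x - p y| <= p (x - y).
Proof.
move=> absKN1; have [_ _ pD] := sp.
have px : p x <= p (x - y) + p y by rewrite -{1}(subrK y x) pD.
have py : p y <= p (x - y) + p x.
  by rewrite -(seminormN (x - y) absKN1) opprB -{1}(subrK x y) pD.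
rewrite ler_norml; apply/andP; split; lra.
Qed.

Lemma continuous_wrt_seminorm_topology :
  absK (-1) = 1 -> continuous_wrt (seminorm_topology p) p.
Proof.
move=> absKN1 A oA x0 /oA /nbhs_ballP [e /= e0 ballA].
exists [set tt], e; split; [exact: finite_set1 | exact: e0 |].
move=> x /(_ tt erefl); rewrite lte_fin => pxx0.
apply: ballA; rewrite /ball /= distrC.
exact: le_lt_trans (seminorm_lipschitz x x0 absKN1) pxx0.
Qed.

Lemma seminorm_topology_sub {I : Type} {rho : I -> X -> \bar R} :
  absK 0 = 0 -> continuous_wrt (induced_topology rho) p ->
  seminorm_topology p `<=` induced_topology rho.
Proof.
move=> absK0 cp U oU x0 /oU [J [eps [_ eps0 ballU]]].
have : induced_topology rho (p @^-1` [set r | r < eps]) by apply/cp/open_lt.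
move=> /(_ 0); rewrite /= (seminorm0 absK0).
move=> /(_ eps0) [J' [e' [fJ' e'0 ball0]]].
exists J', e'; split => // x rhox; apply: ballU => i _ /=.
rewrite lte_fin; apply: (ball0 (x - x0)) => j /rhox.
by rewrite subr0.
Qed.

End SeminormTopology.

Lemma theorem3p5_for_abs (R : realType) (K : nzRingType) (absK : K -> R) :
  absK 0 = 0 -> absK (-1) = 1 -> theorem3p5_for absK.
Proof.
move=> absK0 absKN1 X tau tauF [I [rho [_ ->]]] [_ sub_tauF maxF] p sp.
split; last exact: continuous_wrt_sub.
move=> cp; have sub_sp : seminorm_topology p `<=` tauF.
  exact: maxF _ (seminorm_topology_lc sp) (seminorm_topology_sub sp absK0 cp).
exact: continuous_wrt_sub sub_sp (continuous_wrt_seminorm_topology sp absKN1).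
Qed.

Theorem theorem3p5 (R : realType) :
  theorem3p5_for (Num.norm : R -> R) /\
  theorem3p5_for (@ComplexField.Normc.normc R).
Proof.
split; apply: theorem3p5_for_abs.
- exact: normr0.
- by rewrite normrN normr1.
- exact: ComplexField.Normc.normc0.
- exact: etrans (@normcN R 1) (@ComplexField.Normc.normc1 R).
Qed.
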